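(* Let $\mathscr C$ be a small permutative category, let $X\in\Phi(\mathscr C)$, let $u\in\mathcal M$, and write $\mathrm{supp}(X)=\{i_1<\dots<i_m\}$. Then there exists a unique $\widetilde\sigma\in\Sigma_m$ with $u(i_{\widetilde\sigma^{-1}(1)})<\dots<u(i_{\widetilde\sigma^{-1}(m)})$, and, as a morphism $\bigotimes_{j=1}^mX_{i_j}\to\bigotimes_{j=1}^mX_{i_{\widetilde\sigma^{-1}(j)}}$ in $\mathscr C$, the structure isomorphism $[u,1]_X$ is the coherence isomorphism associated to $\widetilde\sigma$.
   Context: A permutative category is a symmetric monoidal category $(\mathscr C,\otimes,\mathbf 1,\tau)$ whose associativity and unit isomorphisms are identities; for $\sigma\in\Sigma_K$ the coherence isomorphism $\bigotimes_{i=1}^KA_i\to\bigotimes_{i=1}^KA_{\sigma^{-1}(i)}$ associated to $\sigma$ is the composite of maps $\mathrm{id}\otimes\tau\otimes\mathrm{id}$ along a decomposition of $\sigma$ into adjacent transpositions. Let $\omega=\{1,2,\dots\}$ and $\mathcal M$ the monoid of injections $\omega\to\omega$. $\Phi(\mathscr C)$ has objects the sequences $X=(X_1,X_2,\dots)$ of objects of $\mathscr C$ with $X_i=\mathbf 1$ for almost all $i$, morphisms $X\to Y$ the morphisms $\bigotimes_{i\in\omega}X_i\to\bigotimes_{i\in\omega}Y_i$ in $\mathscr C$ (ordered tensor product of the non-unit entries), $\mathrm{supp}(X)=\{i:X_i\ne\mathbf 1\}$, $(u_*X)_i=X_j$ if $i=u(j)$ and $\mathbf 1$ if $i\notin\mathrm{im}(u)$,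 and structure isomorphism $[u,1]_X\colon X\to u_*X$ defined as the coherence isomorphism $\bigotimes_{i=1}^KX_i\to\bigotimes_{i=1}^KX_{\sigma^{-1}(i)}=\bigotimes_{i=1}^K(u_*X)_i$ associated to a permutation $\sigma\in\Sigma_K$ with $\sigma(i)=u(i)$ for all $i\le K$ with $X_i\ne\mathbf 1$, where $K$ is chosen with $X_i=\mathbf 1=(u_*X)_i$ for all $i>K$ (independent of choices). *)

From mathcomp Require Import all_boot all_fingroup.
Set Implicit Arguments. Unset Strict Implicit. Unset Printing Implicit Defensive.

(* A (small) permutative category, presented "arrows-only": a type of objects,
   a type of morphisms with domain/codomain maps, identities and composition
   (comp g f = g o f), a strict monoidal product that is strictly associative
   and strictly unital, and a symmetry tau satisfying the axioms of a
   symmetric monoidal category (plus tau_{A,1} = id, as in May's definition). *)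
Record PermCat := {
  ob : Type; hom : Type;
  dom : hom -> ob; cod : hom -> ob;
  idm : ob -> hom; comp : hom -> hom -> hom;
  tens : ob -> ob -> ob; tensm : hom -> hom -> hom; unit : ob;
  tau : ob -> ob -> hom;
  dom_id : forall a, dom (idm a) = a;
  cod_id : forall a, cod (idm a) = a;
  dom_comp : forall g f, cod f = dom g -> dom (comp g f) = dom f;
  cod_comp : forall g f, cod f = dom g -> cod (comp g f) = cod g;
  comp_idl : forall f, comp (idm (cod f)) f = f;
  comp_idr : forall f, comp f (idm (dom f)) = f;
  comp_assoc : forall h g f, cod f = dom g -> cod g = dom h ->
    comp h (comp g f) = comp (comp h g) f;
  dom_tensm : forall f g, dom (tensm f g) = tens (dom f) (dom g);
  cod_tensm : forall f g, cod (tensm f g) = tens (cod f) (cod g);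
  tensm_id : forall a b, tensm (idm a) (idm b) = idm (tens a b);
  tensm_comp : forall g f g' f', cod f = dom g -> cod f' = dom g' ->
    tensm (comp g f) (comp g' f') = comp (tensm g g') (tensm f f');
  tens_assoc : forall a b c, tens (tens a b) c = tens a (tens b c);
  tensm_assoc : forall f g h, tensm (tensm f g) h = tensm f (tensm g h);
  tens_unitl : forall a, tens unit a = a;
  tens_unitr : forall a, tens a unit = a;
  tensm_unitl : forall f, tensm (idm unit) f = f;
  tensm_unitr : forall f, tensm f (idm unit) = f;
  dom_tau : forall a b, dom (tau a b) = tens a b;
  cod_tau : forall a b, cod (tau a b) = tens b a;
  tau_nat : forall f g, comp (tau (cod f) (cod g)) (tensm f g)
                        = comp (tensm g f) (tau (dom f) (dom g));
  tau_inv : forall a b, comp (tau b a) (tau a b) = idm (tens a b);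
  tau_hex : forall a b c, tau a (tens b c)
      = comp (tensm (idm b) (tau a c)) (tensm (tau a b) (idm c));
  tau_unit : forall a, tau a unit = idm a
}.

Section Coh.
Variable C : PermCat.

Definition tens_list (l : seq (ob C)) : ob C := foldr (@tens C) (@unit C) l.

Definition swap_seq (T : Type) (l : seq T) (k : nat) : seq T :=
  match drop k l with
  | a :: b :: r => take k l ++ b :: a :: r
  | _ => l
  end.

Definition swap_mor (l : seq (ob C)) (k : nat) : hom C :=
  match drop k l with
  | a :: b :: r => tensm (idm (tens_list (take k l)))
                         (tensm (tau a b) (idm (tens_list r)))
  | _ => idm (tens_list l)
  end.

Fixpoint along (l : seq (ob C)) (ks : seq nat) : hom C :=
  match ks with
  | [::] => idm (tens_list l)
  | k :: ks' => comp (along (swap_seq l k) ks') (swap_mor l k)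
  end.
End Coh.

(* ks is a decomposition of sigma into adjacent transpositions: performing the
   swaps on positions 0..K-1 moves the factor at position i to position
   sigma(i), i.e. position j ends up holding sigma^-1(j). *)
Definition decomposes (K : nat) (sigma : 'S_K) (ks : seq nat) : bool :=
  all (fun k => k.+1 < K) ks &&
  (foldl (@swap_seq nat) (iota 0 K) ks == [seq val ((sigma^-1)%g i) | i <- enum 'I_K]).

(* f is the coherence isomorphism  (x)_i A_i -> (x)_i A_{sigma^-1(i)}
   associated to sigma (computed along some decomposition). *)
Definition is_coherence_iso (C : PermCat) (K : nat) (sigma : 'S_K)
    (A : seq (ob C)) (f : hom C) : Prop :=
  exists ks, decomposes sigma ks /\ f = along A ks.

(* f is (a representative of) the structure isomorphism [u,1]_X : X -> u_* X,
   for any admissible choice of K and sigma.  Indices are 0-based. *)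
Definition is_structure_iso (C : PermCat) (X : nat -> ob C) (u : nat -> nat)
    (f : hom C) : Prop :=
  exists K (sigma : 'S_K),
    (forall i, K <= i -> X i = unit C) /\
    (forall i, K <= i -> forall j, u j = i -> X j = unit C) /\
    (forall i : 'I_K, X i <> unit C -> val (sigma i) = u i) /\
    is_coherence_iso sigma [seq X i | i <- iota 0 K] f.

(* Label the factors by distinct indices.  A composite of adjacent symmetries
   then depends only on the resulting order of the labels: it equals the normal
   form [canon] that moves the factors of the target to the front one at a
   time, because one adjacent swap followed by the normal form of the swapped
   list is the normal form of the original list (naturality and the hexagon
   axioms).  Unit factors can be deleted from a normal form since
   tau_{A,1} = id.  So [u,1]_X is the normal form from X_1 ... X_K to its
   u-rearrangement; deleting units leaves the normal form from the support in
   increasing order to the support ordered by u, which is the coherence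
   isomorphism of the unique permutation sorting the support by u. *)

From mathcomp Require Import all_boot all_fingroup.
From Stdlib Require Import Classical.
Set Implicit Arguments. Unset Strict Implicit. Unset Printing Implicit Defensive.

Variant split_first_spec (T : eqType) (t : T) : seq T -> Prop :=
  SplitFirst P Q of t \notin P : split_first_spec t (P ++ t :: Q).

Lemma split_firstP (T : eqType) (s : seq T) t : t \in s -> split_first_spec t s.
Proof.
move=> ts; rewrite -(cat_take_drop (index t s) s) (drop_nth t) ?index_mem // nth_index //.
by constructor; rewrite -has_pred1 has_take ?has_pred1 // ltnn.
Qed.

Lemma perm_cat_cons_consl (T : eqType) (P Q s : seq T) t :
  perm_eq (P ++ t :: Q) (t :: s) -> perm_eq (P ++ Q) s.
Proof. by rewrite (perm_catCA P [:: t] Q) perm_cons. Qed.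

Lemma uniq_cat_cons (T : eqType) (P Q : seq T) t :
  uniq (P ++ t :: Q) -> t \notin P /\ uniq (P ++ Q).
Proof.
rewrite (perm_uniq (_ : perm_eq _ (t :: P ++ Q))) ?(perm_catCA P [:: t] Q) //=.
by rewrite mem_cat negb_or => /andP[/andP[]].
Qed.

Lemma perm_swap_mid (T : eqType) (A B : seq T) a b :
  perm_eql (A ++ a :: b :: B) (A ++ b :: a :: B).
Proof. by apply/permPl; rewrite perm_cat2l (perm_catCA [:: a] [:: b] B). Qed.

Lemma uniq_swap_mid (T : eqType) (A B : seq T) a b :
  uniq (A ++ b :: a :: B) = uniq (A ++ a :: b :: B).
Proof. by apply: perm_uniq; rewrite perm_sym perm_swap_mid. Qed.

Lemma swap_seq_map (T U : Type) (f : T -> U) (l : seq T) k :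
  swap_seq (map f l) k = map f (swap_seq l k).
Proof.
rewrite /swap_seq -map_drop -map_take.
by case: (drop k l) => [|a [|b r]] //=; rewrite map_cat.
Qed.

Lemma drop_cons2 (T : Type) (l : seq T) k : k.+1 < size l ->
  exists a b B, drop k l = a :: b :: B.
Proof.
move=> lt_k; have : 1 < size (drop k l) by rewrite size_drop ltn_subRL addn1.
by case: (drop k l) => [|a [|b B]] // _; exists a, b, B.
Qed.

Lemma perm_swap_seq (T : eqType) (l : seq T) k : perm_eq (swap_seq l k) l.
Proof.
rewrite /swap_seq; case dropE: (drop k l) => [|a [|b B]] //.
by rewrite -{2}(cat_take_drop k l) dropE perm_sym perm_swap_mid.
Qed.

Lemma perm_foldl_swap_seq (T : eqType) (l : seq T) ks :
  perm_eq (foldl (@swap_seq T) l ks) l.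
Proof.
elim: ks l => [|k ks IH] l /=; first exact: perm_refl.
exact: perm_trans (IH _) (perm_swap_seq _ _).
Qed.

Definition permute (U : Type) n (f : 'I_n -> U) (st : 'S_n) : seq U :=
  [seq f ((st^-1)%g j) | j <- enum 'I_n].

Lemma map_permute (U V : Type) n (g : U -> V) (f : 'I_n -> U) st :
  map g (permute f st) = permute (g \o f) st.
Proof. by rewrite -map_comp. Qed.

Lemma perm_eq_permute (U : eqType) n (f : 'I_n -> U) st :
  perm_eq (permute f st) [seq f i | i <- enum 'I_n].
Proof.
rewrite /permute (map_comp f) perm_map // uniq_perm ?enum_uniq //.
  by rewrite (map_inj_uniq perm_inj) enum_uniq.
by move=> i; rewrite mem_enum; apply/mapP; exists (st i); rewrite ?mem_enum ?permK.
Qed.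

Lemma map_nth_enum_ord (T : Type) x0 (s : seq T) :
  [seq nth x0 s (val i) | i <- enum 'I_(size s)] = s.
Proof. by rewrite -[RHS](mkseq_nth x0) /mkseq -val_enum_ord -map_comp. Qed.

Lemma permute_nth_inj (T : eqType) x0 (s : seq T) :
  uniq s -> injective (@permute T (size s) (nth x0 s \o val)).
Proof.
move=> s_uniq st1 st2 /eq_in_map E; apply: invg_inj; apply/permP => j; apply: val_inj.
by apply/eqP; rewrite -(nth_uniq x0 _ _ s_uniq) ?ltn_ord //; apply/eqP/E; rewrite mem_enum.
Qed.

Lemma permute_nth_surj (T : eqType) x0 (s r : seq T) : uniq s -> perm_eq r s ->
  exists st : 'S_(size s), permute (nth x0 s \o val) st = r.
Proof.
move=> s_uniq rs; have r_size : size r = size s by rewrite (perm_size rs).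
have r_in (j : 'I_(size s)) : nth x0 r j \in s by rewrite -(perm_mem rs) mem_nth ?r_size.
have index_lt (j : 'I_(size s)) : index (nth x0 r j) s < size s by rewrite index_mem.
pose f j := Ordinal (index_lt j).
have f_inj : injective f.
  move=> j1 j2 /(congr1 (nth x0 s \o val)) /=; rewrite !nth_index // => /eqP.
  by rewrite nth_uniq ?r_size ?(perm_uniq rs) // => /eqP /val_inj.
exists (perm f_inj)^-1%g; rewrite /permute invgK.
rewrite -[RHS](map_nth_enum_ord x0) r_size; apply: eq_map => j.
by rewrite /= permE /= nth_index.
Qed.

Lemma sorting_perm_unique (T : eqType) x0 (key : T -> nat) (s : seq T) :
  uniq s -> {in s &, injective key} ->
  exists! st : 'S_(size s), sorted ltn (permute (key \o nth x0 s \o val) st).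
Proof.
move=> s_uniq key_inj.
have sortedE (st : 'S_(size s)) : sorted ltn (permute (key \o nth x0 s \o val) st) =
                                  sorted (relpre key ltn) (permute (nth x0 s \o val) st).
  by rewrite -sorted_map map_permute.
have [st stE] := permute_nth_surj x0 s_uniq (permEl (perm_sort (relpre key leq) s)).
have st_sorted : sorted (relpre key ltn) (permute (nth x0 s \o val) st).
  rewrite stE -sorted_map ltn_sorted_uniq_leq sorted_map sort_sorted ?andbT.
    by rewrite map_inj_in_uniq ?sort_uniq // => x y; rewrite !mem_sort; apply: key_inj.
  by move=> x y; apply: leq_total.
exists st; split=> [|st']; rewrite sortedE // => st'_sorted.
apply: (@permute_nth_inj _ x0 _ s_uniq).
apply: (irr_sorted_eq (leT := relpre key ltn) _ _ st_sorted st'_sorted).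
- by move=> y x z; apply: ltn_trans.
- by move=> x; rewrite /= ltnn.
- by move=> x; rewrite !(perm_mem (perm_eq_permute _ _)) map_nth_enum_ord.
Qed.

Lemma foldl_swap_seq_map (T U : Type) (f : T -> U) (l : seq T) ks :
  foldl (@swap_seq U) (map f l) ks = map f (foldl (@swap_seq T) l ks).
Proof. by elim: ks l => [|k ks IH] l //=; rewrite swap_seq_map IH. Qed.

Lemma decomposes_foldl (T : Type) x0 K (sigma : 'S_K) ks (l : seq T) :
  decomposes sigma ks -> size l = K ->
  foldl (@swap_seq T) l ks = permute (nth x0 l \o val) sigma.
Proof.
case/andP=> _ /eqP foldE lK; subst K.
by rewrite -{1}(mkseq_nth x0 l) /mkseq foldl_swap_seq_map foldE -map_comp.
Qed.

Lemma filter_permute_val (u : nat -> nat) (s : seq nat) K (sigma : 'S_K)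
    (st : 'S_(size s)) :
  (forall i, i \in s -> i < K) -> (forall i : 'I_K, val i \in s -> val (sigma i) = u i) ->
  sorted ltn (permute (u \o nth 0 s \o val) st) ->
  [seq i <- permute val sigma | i \in s] = permute (nth 0 s \o val) st.
Proof.
move=> s_lt_K sigma_u st_sorted.
apply: (irr_sorted_eq (leT := relpre u ltn)).
- by move=> y x z; apply: ltn_trans.
- by move=> x; rewrite /= ltnn.
- rewrite /permute filter_map sorted_map.
  apply: (sub_in_sorted (P := preim (val \o sigma^-1%g) (mem s)) (e := relpre val ltn)).
  + by move=> i j si sj; rewrite /= -!sigma_u ?permKV.
  + exact: filter_all.
  + apply: sorted_filter; first exact: ltn_trans.
    by rewrite -sorted_map val_enum_ord iota_ltn_sorted.
- by rewrite -sorted_map map_permute.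
- move=> x; rewrite mem_filter !(perm_mem (perm_eq_permute _ _)) map_nth_enum_ord.
  by rewrite val_enum_ord mem_iota /=; case: (boolP (x \in s)) => // /s_lt_K ->.
Qed.

Lemma filter_mem_iota (s : seq nat) n : sorted ltn s -> (forall i, i \in s -> i < n) ->
  [seq i <- iota 0 n | i \in s] = s.
Proof.
move=> s_sorted s_lt_n; apply: (irr_sorted_eq ltn_trans ltnn) => //.
  by apply: sorted_filter; [apply: ltn_trans | apply: iota_ltn_sorted].
by move=> x; rewrite mem_filter mem_iota /=; case: (boolP (x \in s)) => // /s_lt_n ->.
Qed.

Lemma tens_list_cat (C : PermCat) (l1 l2 : seq (ob C)) :
  tens_list (l1 ++ l2) = tens (tens_list l1) (tens_list l2).
Proof.
elim: l1 => [|x l IH] /=; first by rewrite tens_unitl.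
by rewrite IH tens_assoc.
Qed.

Lemma tens_list_map_cons (C : PermCat) (T : Type) (f : T -> ob C) x l :
  tens_list (map f (x :: l)) = tens (f x) (tens_list (map f l)).
Proof. by []. Qed.

Ltac hom_types := repeat first
  [ progress rewrite ?(dom_tensm, cod_tensm, dom_id, cod_id, dom_tau, cod_tau,
                       tens_assoc, tens_unitl, tens_unitr, map_cat, tens_list_cat,
                       tens_list_map_cons)
  | rewrite dom_comp | rewrite cod_comp ]; try done.

Section PermCatTheory.
Variable C : PermCat.
Implicit Types (f g : hom C) (a b c x y : ob C).

Lemma comp_idl_cod x f : cod f = x -> comp (idm x) f = f.
Proof. by move<-; rewrite comp_idl. Qed.

Lemma comp_idr_dom x f : dom f = x -> comp f (idm x) = f.
Proof. by move<-; rewrite comp_idr. Qed.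

Lemma comp_idid x : comp (idm x) (idm x) = idm x.
Proof. by apply: comp_idl_cod; rewrite cod_id. Qed.

Lemma tau_unitl a : tau (unit C) a = idm a.
Proof.
have := tau_inv a (unit C).
by rewrite tau_unit comp_idr_dom ?tens_unitr // dom_tau tens_unitl.
Qed.

Lemma tensm_compl f g x : cod f = dom g ->
  tensm (comp g f) (idm x) = comp (tensm g (idm x)) (tensm f (idm x)).
Proof. by move=> fg; rewrite -tensm_comp ?comp_idid // dom_id cod_id. Qed.

Lemma tensm_compr f g x : cod f = dom g ->
  tensm (idm x) (comp g f) = comp (tensm (idm x) g) (tensm (idm x) f).
Proof. by move=> fg; rewrite -tensm_comp ?comp_idid // dom_id cod_id. Qed.

(* [tau_hex] with both sides inverted. *)
Lemma tau_hexl a b c :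
  tau (tens b c) a = comp (tensm (tau b a) (idm c)) (tensm (idm b) (tau c a)).
Proof.
set R := comp _ _.
have tauR : comp (tau a (tens b c)) R = idm (tens b (tens c a)).
  rewrite tau_hex /R -comp_assoc; try by hom_types.
  rewrite (comp_assoc (h := tensm (tau a b) (idm c))); try by hom_types.
  rewrite -tensm_compl; last by hom_types.
  rewrite tau_inv tensm_id comp_idl_cod; last by hom_types.
  by rewrite -tensm_compr ?tau_inv ?tensm_id //; hom_types.
rewrite -[LHS](comp_idr_dom (x := tens b (tens c a))); last by hom_types.
rewrite -tauR comp_assoc; try by rewrite /R; hom_types.
by rewrite tau_inv comp_idl_cod // /R; hom_types.
Qed.

Lemma tensm_interchange f g x x' y y' :
  dom f = x -> cod f = x' -> dom g = y -> cod g = y' ->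
  comp (tensm f (idm y')) (tensm (idm x) g) = comp (tensm (idm x') g) (tensm f (idm y)).
Proof.
by move=> <- <- <- <-; rewrite -!tensm_comp ?comp_idr ?comp_idl //; hom_types.
Qed.

Lemma tau_natl f y :
  comp (tau (cod f) y) (tensm f (idm y)) = comp (tensm (idm y) f) (tau (dom f) y).
Proof. by rewrite -{1}(cod_id y) tau_nat dom_id. Qed.

End PermCatTheory.

Section CanonicalMaps.
Variables (C : PermCat) (X : nat -> ob C).
Local Notation TL l := (tens_list [seq X i | i <- l]).

(* [extract P t Q : TL (P ++ t :: Q) -> X t (x) TL (P ++ Q)] *)
Definition extract (P : seq nat) t (Q : seq nat) : hom C :=
  tensm (tau (TL P) (X t)) (idm (TL Q)).

Definition swap_at (A : seq nat) a b (B : seq nat) : hom C :=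
  tensm (idm (TL A)) (tensm (tau (X a) (X b)) (idm (TL B))).

Lemma extract_swap_after A1 t A2 a b B :
  comp (extract A1 t (A2 ++ b :: a :: B)) (swap_at (A1 ++ t :: A2) a b B) =
  comp (tensm (idm (X t)) (swap_at (A1 ++ A2) a b B)) (extract A1 t (A2 ++ a :: b :: B)).
Proof.
rewrite /extract /swap_at !map_cat !tens_list_cat -![idm (tens (TL A2) _)]tensm_id.
rewrite -![tensm (tau _ _) (tensm _ _)]tensm_assoc -[tensm (idm (X t)) _]tensm_assoc tensm_id.
by apply: tensm_interchange; hom_types.
Qed.

Lemma swap_at_catr A a b B1 B2 :
  swap_at A a b (B1 ++ B2) = tensm (swap_at A a b B1) (idm (TL B2)).
Proof. by rewrite /swap_at map_cat tens_list_cat !tensm_assoc tensm_id. Qed.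

Lemma extract_swap_before A a b B1 t B2 :
  comp (extract (A ++ b :: a :: B1) t B2) (swap_at A a b (B1 ++ t :: B2)) =
  comp (tensm (idm (X t)) (swap_at A a b (B1 ++ B2))) (extract (A ++ a :: b :: B1) t B2).
Proof.
have -> : B1 ++ t :: B2 = (B1 ++ [:: t]) ++ B2 by rewrite -catA.
rewrite !swap_at_catr /extract /= tens_unitr.
set M := swap_at A a b B1.
have [domM codM] : dom M = TL (A ++ a :: b :: B1) /\ cod M = TL (A ++ b :: a :: B1).
  by rewrite /M /swap_at; split; hom_types.
rewrite -tensm_compl; last by hom_types.
rewrite -codM tau_natl domM tensm_compl; last by hom_types.
by rewrite tensm_assoc.
Qed.

Lemma extract_swap_fst A a b B :
  comp (extract (A ++ [:: b]) a B) (swap_at A a b B) = extract A a (b :: B).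
Proof.
rewrite /extract map_cat tens_list_cat /= tens_unitr tau_hexl tensm_compl; last by hom_types.
rewrite -comp_assoc /swap_at; try by hom_types.
rewrite !tensm_assoc -tensm_compr; last by hom_types.
rewrite -tensm_compl; last by hom_types.
by rewrite tau_inv !tensm_id comp_idr_dom //; hom_types.
Qed.

Lemma extract_swap_snd A a b B :
  comp (extract A b (a :: B)) (swap_at A a b B) = extract (A ++ [:: a]) b B.
Proof.
rewrite /extract map_cat tens_list_cat /= tens_unitr tau_hexl tensm_compl; last by hom_types.
by rewrite /swap_at !tensm_assoc tensm_id.
Qed.

(* The normal form of coherence maps [TL ls -> TL tgt]: bring the first factor
   of [tgt] to the front, then rearrange the remaining factors. *)
Fixpoint canon (ls tgt : seq nat) : hom C :=
  match tgt with
  | [::] => idm (TL ls)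
  | t :: tgt' =>
      comp (tensm (idm (X t)) (canon (rem t ls) tgt'))
           (extract (take (index t ls) ls) t (drop (index t ls).+1 ls))
  end.

Lemma canon_cons (P Q tgt : seq nat) t : t \notin P ->
  canon (P ++ t :: Q) (t :: tgt) =
  comp (tensm (idm (X t)) (canon (P ++ Q) tgt)) (extract P t Q).
Proof.
move=> tP /=; rewrite remE.
have -> : index t (P ++ t :: Q) = size P by rewrite index_cat (negbTE tP) /= eqxx addn0.
by rewrite take_size_cat // drop_cat ltnNge leqnSn /= subSn // subnn; case: Q.
Qed.

Lemma canon_types (ls tgt : seq nat) : perm_eq ls tgt ->
  dom (canon ls tgt) = TL ls /\ cod (canon ls tgt) = TL tgt.
Proof.
elim: tgt ls => [|t tgt IH] ls permL.
  by rewrite (perm_small_eq _ permL) //= dom_id cod_id.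
have tls : t \in ls by rewrite (perm_mem permL) mem_head.
case/split_firstP: tls permL => P Q tP permL.
have [d c] := IH _ (perm_cat_cons_consl permL).
by rewrite canon_cons //; split; hom_types; rewrite ?d ?c; hom_types.
Qed.

Local Ltac unfold_types := rewrite /extract /swap_at; hom_types.

Lemma canon_swap_fst (tgt A B : seq nat) a b :
  uniq (A ++ a :: b :: B) -> perm_eq (A ++ a :: b :: B) (a :: tgt) ->
  comp (canon (A ++ b :: a :: B) (a :: tgt)) (swap_at A a b B) =
  canon (A ++ a :: b :: B) (a :: tgt).
Proof.
move=> uniqL permL; have [aA _] := uniq_cat_cons uniqL.
have catE : A ++ b :: a :: B = (A ++ [:: b]) ++ a :: B by rewrite -catA.
have uniqLb : uniq ((A ++ [:: b]) ++ a :: B) by rewrite -catE uniq_swap_mid.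
have [aAb _] := uniq_cat_cons uniqLb.
have [d _] := canon_types (ls := A ++ b :: B) (perm_cat_cons_consl permL).
rewrite catE !canon_cons // -catA cat1s -comp_assoc ?extract_swap_fst //; unfold_types.
by rewrite d; hom_types.
Qed.

Lemma canon_swap_snd (tgt A B : seq nat) a b :
  uniq (A ++ a :: b :: B) -> perm_eq (A ++ a :: b :: B) (b :: tgt) ->
  comp (canon (A ++ b :: a :: B) (b :: tgt)) (swap_at A a b B) =
  canon (A ++ a :: b :: B) (b :: tgt).
Proof.
have catE : A ++ a :: b :: B = (A ++ [:: a]) ++ b :: B by rewrite -catA.
move=> uniqL; have [bA _] := uniq_cat_cons (etrans (uniq_swap_mid A B a b) uniqL).
rewrite catE in uniqL * => permL; have [bAa _] := uniq_cat_cons uniqL.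
have [d _] := canon_types (ls := (A ++ [:: a]) ++ B) (perm_cat_cons_consl permL).
rewrite -catA cat1s in d.
rewrite !canon_cons // -catA cat1s -comp_assoc ?extract_swap_snd //; unfold_types.
by rewrite d; hom_types.
Qed.

Lemma canon_swap tgt A a b B : uniq (A ++ a :: b :: B) -> perm_eq (A ++ a :: b :: B) tgt ->
  comp (canon (A ++ b :: a :: B) tgt) (swap_at A a b B) = canon (A ++ a :: b :: B) tgt.
Proof.
elim: tgt A B => [|t tgt IH] A B uniqL permL.
  by have := perm_size permL; rewrite size_cat /= addnS.
have : t \in A ++ a :: b :: B by rewrite (perm_mem permL) mem_head.
rewrite mem_cat !inE => /or4P[tA | /eqP ta | /eqP tb | tB].
- case/splitPr: tA uniqL permL => A1 A2; rewrite -!catA !cat_cons => uniqL permL.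
  have [tA1 uniqL'] := uniq_cat_cons uniqL.
  have permL' := perm_cat_cons_consl permL.
  have permLb : perm_eq (A1 ++ A2 ++ b :: a :: B) tgt by rewrite catA -perm_swap_mid -catA.
  have [d c] := canon_types permLb.
  have := IH (A1 ++ A2) B; rewrite -!catA => /(_ uniqL' permL') IHt.
  rewrite !canon_cons // -IHt -comp_assoc; try by unfold_types; rewrite ?d; hom_types.
  rewrite extract_swap_after comp_assoc; try by unfold_types; rewrite ?c ?d; hom_types.
  by rewrite -tensm_compr // d; unfold_types.
- by subst t; apply: canon_swap_fst.
- by subst t; apply: canon_swap_snd.
- case/splitPr: tB uniqL permL => B1 B2.
  have catE x y : A ++ x :: y :: B1 ++ t :: B2 = (A ++ x :: y :: B1) ++ t :: B2.
    by rewrite -catA.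
  rewrite !catE => uniqL permL.
  have [tAB uniqL'] := uniq_cat_cons uniqL.
  have uniqLb : uniq ((A ++ b :: a :: B1) ++ t :: B2) by rewrite -catE uniq_swap_mid catE.
  have [tAB' _] := uniq_cat_cons uniqLb.
  have permL' := perm_cat_cons_consl permL.
  rewrite -!catA /= in uniqL' permL'.
  have permLb : perm_eq (A ++ b :: a :: B1 ++ B2) tgt by rewrite -perm_swap_mid.
  have [d c] := canon_types permLb.
  rewrite !canon_cons // -!catA /= -(IH _ _ uniqL' permL') -comp_assoc;
    try by unfold_types; rewrite ?d; hom_types.
  rewrite extract_swap_before comp_assoc; try by unfold_types; rewrite ?c ?d; hom_types.
  by rewrite -tensm_compr // d; unfold_types.
Qed.

Lemma canon_id ls : canon ls ls = idm (TL ls).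
Proof.
elim: ls => [|t ls IH] //; rewrite -[t :: ls]/([::] ++ t :: ls) canon_cons //.
by rewrite IH /extract tau_unitl !tensm_id comp_idid.
Qed.

Lemma along_canon ks ls : uniq ls -> all (fun k => k.+1 < size ls) ks ->
  along [seq X i | i <- ls] ks = canon ls (foldl (@swap_seq nat) ls ks).
Proof.
elim: ks ls => [|k ks IH] ls uniqL /=; first by rewrite canon_id.
case/andP=> /drop_cons2[a [b [B dropE]]] ks_lt.
have lsE : ls = take k ls ++ a :: b :: B by rewrite -dropE cat_take_drop.
have swapE : swap_seq ls k = take k ls ++ b :: a :: B by rewrite /swap_seq dropE.
have -> : swap_mor [seq X i | i <- ls] k = swap_at (take k ls) a b B.
  by rewrite /swap_mor -map_drop -map_take dropE.
rewrite swap_seq_map IH; last 2 first.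
- by rewrite (perm_uniq (perm_swap_seq _ _)).
- by rewrite (perm_size (perm_swap_seq _ _)).
rewrite swapE canon_swap -?lsE // perm_sym -swapE.
by apply: perm_trans (perm_foldl_swap_seq _ _) (perm_swap_seq _ _).
Qed.

Lemma tens_list_filter (p : pred nat) l : (forall i, ~~ p i -> X i = unit C) ->
  TL (filter p l) = TL l.
Proof.
move=> Xp; elim: l => [|i l IH] //=.
by case: ifP => pi; rewrite /= IH // (Xp i) ?pi ?tens_unitl.
Qed.

Lemma canon_filter (p : pred nat) : (forall i, ~~ p i -> X i = unit C) ->
  forall ls tgt, uniq ls -> perm_eq ls tgt ->
  canon ls tgt = canon (filter p ls) (filter p tgt).
Proof.
move=> Xp ls tgt; elim: tgt ls => [|t tgt IH] ls uniqL permL.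
  by rewrite (perm_small_eq _ permL).
have tls : t \in ls by rewrite (perm_mem permL) mem_head.
case/split_firstP: tls uniqL permL => P Q tP uniqL permL.
have [_ uniqL'] := uniq_cat_cons uniqL.
have permL' := perm_cat_cons_consl permL.
have [d _] := canon_types permL'.
rewrite canon_cons // filter_cat /=; case pt: (p t).
  rewrite canon_cons ?mem_filter ?negb_and ?tP ?orbT // IH // filter_cat.
  by rewrite /extract !tens_list_filter.
rewrite /extract Xp ?pt // tensm_unitl tau_unit tensm_id comp_idr_dom; last first.
  by rewrite d; hom_types.
by rewrite IH // filter_cat.
Qed.

Lemma along_decomposes K (sigma : 'S_K) ks l : uniq l -> size l = K ->
  decomposes sigma ks ->
  along [seq X i | i <- l] ks = canon l (permute (nth 0 l \o val) sigma).
Proof.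
move=> l_uniq lK ks_dec; rewrite along_canon ?(decomposes_foldl 0 ks_dec) // lK.
by case/andP: ks_dec.
Qed.

End CanonicalMaps.

Theorem corollary2p14 (C : PermCat) (X : nat -> ob C) (u : nat -> nat)
    (s : seq nat)
    (Xfin : exists N, forall i, N <= i -> X i = unit C)
    (u_inj : injective u)
    (s_sorted : sorted ltn s)
    (s_supp : forall i, i \in s <-> X i <> unit C) :
  (exists! st : 'S_(size s),
      sorted ltn [seq u (nth 0 s (val ((st^-1)%g j))) | j <- enum 'I_(size s)]) /\
  (forall st : 'S_(size s),
      sorted ltn [seq u (nth 0 s (val ((st^-1)%g j))) | j <- enum 'I_(size s)] ->
      forall f g, is_structure_iso X u f ->
        is_coherence_iso st [seq X i | i <- s] g -> f = g).
Proof.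
have s_uniq : uniq s := sorted_uniq ltn_trans ltnn s_sorted.
split; first exact: (sorting_perm_unique 0 s_uniq (in2W u_inj)).
move=> st st_sorted f g [K [sigma [XK [_ [sigma_u [ks [ks_dec ->]]]]]]] [ks' [ks'_dec ->]].
have X_out i : i \notin s -> X i = unit C.
  by move=> /negP si; apply: NNPP => /s_supp.
have s_lt_K i : i \in s -> i < K.
  by move=> /s_supp Xi; rewrite ltnNge; apply/negP => /XK.
have sigma_s (i : 'I_K) : val i \in s -> val (sigma i) = u i.
  by move=> /s_supp; apply: sigma_u.
have [ks_lt foldE] : all (fun k => k.+1 < K) ks /\
                     foldl (@swap_seq nat) (iota 0 K) ks = permute val sigma.
  by case/andP: ks_dec => ? /eqP.
rewrite along_canon ?iota_uniq ?size_iota // foldE.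
rewrite (along_decomposes _ s_uniq (erefl _) ks'_dec).
rewrite (canon_filter X_out) ?iota_uniq //; last first.
  by rewrite perm_sym (perm_trans (perm_eq_permute _ _)) // val_enum_ord.
by rewrite filter_mem_iota // (filter_permute_val s_lt_K sigma_s st_sorted).
Qed.
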